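(* In the projected continuous MRA model with any $L\ge1$, for all $\theta,\theta_*\in\mathbb{R}^d$, \[\tilde s_1(\theta)=\big(\theta^{(0)}-\theta_*^{(0)}\big)^2,\qquad \tilde s_2(\theta)=\big((\theta^{(0)})^2-(\theta_*^{(0)})^2\big)^2+\tfrac14\sum_{l=1}^L\big(r_l(\theta)^2-r_l(\theta_* )^2\big)^2,\] \[\tilde s_3(\theta)=\tfrac23\big((\theta^{(0)})^3-(\theta_*^{(0)})^3\big)^2+\tfrac12\sum_{l=1}^L\big(\theta^{(0)}r_l(\theta)^2-\theta_*^{(0)}r_l(\theta_* )^2\big)^2+\tfrac1{16}\sum_{\substack{l,l',l''=1\\l=l'+l''}}^L\Big(r_{l,l',l''}(\theta)^2+r_{l,l',l''}(\theta_* )^2-2r_{l,l',l''}(\theta)r_{l,l',l''}(\theta_* )\cos\big(\lambda_{l,l',l''}(\theta_* )-\lambda_{l,l',l''}(\theta)\big)\] \[\qquad+r_{l,l',l''}(\theta)^2\cos\big(2\lambda_{l,l',l''}(\theta)\big)+r_{l,l',l''}(\theta_* )^2\cos\big(2\lambda_{l,l',l''}(\theta_* )\big)-2r_{l,l',l''}(\theta)r_{l,l',l''}(\theta_* )\cos\big(\lambda_{l,l',l''}(\theta_* )+\lambda_{l,l',l''}(\theta)\big)\Big).\]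
   Context: Let $\theta=(\theta^{(0)},\theta_1^{(1)},\theta_2^{(1)},\dots,\theta_1^{(L)},\theta_2^{(L)})\in\mathbb{R}^d$, $d=2L+1$; $\mathsf{G}\subset\mathsf{O}(d)$ is the group of $g=\operatorname{diag}(1,R_1(\mathfrak g),\dots,R_L(\mathfrak g))$, $\mathfrak g\in[0,1)$, $R_l(\mathfrak g)=\begin{pmatrix}\cos2\pi l\mathfrak g&\sin2\pi l\mathfrak g\\-\sin2\pi l\mathfrak g&\cos2\pi l\mathfrak g\end{pmatrix}$, with Haar probability measure $\Lambda$; $\Pi(\theta)=\sqrt2(\theta^{(0)},\theta_1^{(1)},\dots,\theta_1^{(L)})\in\mathbb{R}^{L+1}$. $\widetilde T_k(\theta)=\int(\Pi g\theta)^{\otimes k}d\Lambda(g)$ and $\tilde s_k(\theta)=\frac1{2(k!)}\|\widetilde T_k(\theta)-\widetilde T_k(\theta_* )\|^2_{\mathrm{HS}}$ (Euclidean norm of tensor entries). For $l\ge1$, $\theta_1^{(l)}+i\theta_2^{(l)}=r_l(\theta)e^{i\lambda_l(\theta)}$; $r_{l,l',l''}=r_lr_{l'}r_{l''}$, $\lambda_{l,l',l''}=\lambda_l-\lambda_{l'}-\lambda_{l''}$. *)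

From Stdlib Require Import Reals List Arith.
From Coquelicot Require Import Coquelicot.
Import ListNotations.
Open Scope R_scope.

(* A parameter theta in R^d, d = 2L+1, is encoded by
   t0 = theta^(0), t1 l = theta_1^(l), t2 l = theta_2^(l) (l = 1..L);
   values of t1, t2 at indices outside 1..L are irrelevant. *)

(* Component i (i = 0..L) of Pi(g theta), with g parametrized by gg in [0,1):
   (R_l(gg) (t1 l, t2 l))_1 = cos(2 pi l gg) t1 l + sin(2 pi l gg) t2 l. *)
Definition proj_rot (t0 : R) (t1 t2 : nat -> R) (gg : R) (i : nat) : R :=
  match i with
  | O => sqrt 2 * t0
  | S _ => sqrt 2 * (cos (2 * PI * INR i * gg) * t1 i + sin (2 * PI * INR i * gg) * t2 i)
  end.

Fixpoint multi_indices (n k : nat) : list (list nat) :=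
  match k with
  | O => [ [] ]
  | S k' => flat_map (fun i => map (cons i) (multi_indices n k')) (seq 0 n)
  end.

(* Entry (i_1..i_k) of T~_k(theta) = int (Pi g theta)^{(x)k} dLambda(g);
   the Haar probability measure on G is the uniform measure on gg in [0,1]. *)
Definition Ttilde (t0 : R) (t1 t2 : nat -> R) (idx : list nat) : R :=
  RInt (fun gg => fold_right Rmult 1 (map (proj_rot t0 t1 t2 gg) idx)) 0 1.

Definition sumR (l : list R) : R := fold_right Rplus 0 l.

Definition stilde (L k : nat) (t0 : R) (t1 t2 : nat -> R)
  (s0 : R) (s1 s2 : nat -> R) : R :=
  / (2 * INR (fact k)) *
  sumR (map (fun idx => (Ttilde t0 t1 t2 idx - Ttilde s0 s1 s2 idx) ^ 2)
            (multi_indices (S L) k)).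

Definition sum1L (L : nat) (f : nat -> R) : R := sumR (map f (seq 1 L)).

Definition rmod (t1 t2 : nat -> R) (l : nat) : R := sqrt (t1 l ^ 2 + t2 l ^ 2).

Definition polar_angles (L : nat) (t1 t2 : nat -> R) (lam : nat -> R) : Prop :=
  forall l, (1 <= l <= L)%nat ->
    t1 l = rmod t1 t2 l * cos (lam l) /\ t2 l = rmod t1 t2 l * sin (lam l).

Definition r3 (t1 t2 : nat -> R) (l l' l'' : nat) : R :=
  rmod t1 t2 l * rmod t1 t2 l' * rmod t1 t2 l''.
Definition lam3 (lam : nat -> R) (l l' l'' : nat) : R := lam l - lam l' - lam l''.

Definition s3_term (t1 t2 lam s1 s2 lams : nat -> R) (l l' l'' : nat) : R :=
  let a := r3 t1 t2 l l' l'' in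
  let b := r3 s1 s2 l l' l'' in
  let x := lam3 lam l l' l'' in
  let y := lam3 lams l l' l'' in
  a ^ 2 + b ^ 2 - 2 * a * b * cos (y - x)
  + a ^ 2 * cos (2 * x) + b ^ 2 * cos (2 * y) - 2 * a * b * cos (y + x).

From Stdlib Require Import Reals List Lra Lia ZArith Permutation.
From Coquelicot Require Import Coquelicot.
Import ListNotations.
Open Scope R_scope.

(** In polar coordinates the coordinate l of [Pi g theta] is
    [sqrt 2 * r_l * cos (2 pi l g - lambda_l)] (with [r_0 = theta^(0)], [lambda_0 = 0]).
    By the product-to-sum formulas a product of k such coordinates is a combination of
    [cos (2 pi m g + phi)] with [m = +-l_1 +- ... +- l_k], and integrating over [g] in
    [[0, 1]] keeps exactly the terms with [m = 0].  Hence the entry of [T~_k] at a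
    multi-index is nonzero only when the index satisfies a frequency balance
    ([l = l'] for k = 2, [l = l' + l''] or an index 0 for k = 3), and summing the
    squared entry differences over all multi-indices gives the three formulas.  For
    k = 3 the three positions of the largest index contribute the same triple sum. *)

Local Notation "\sum_ ( i <- r ) F" := (sumR (map (fun i => F) r))
  (at level 41, F at level 41, i, r at level 50,
   format "'[' \sum_ ( i  <-  r ) '/  '  F ']'").

Lemma sumR_map_cons {A : Type} (f : A -> R) a l :
  \sum_(x <- a :: l) f x = f a + \sum_(x <- l) f x.
Proof. reflexivity. Qed.

Lemma sumR_app (l1 l2 : list R) : sumR (l1 ++ l2) = sumR l1 + sumR l2.
Proof. unfold sumR. induction l1 as [|x l1 IH]; cbn; rewrite ?IH; ring. Qed.

Lemma sumR_map_ext_in {A : Type} (l : list A) (f g : A -> R) :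
  (forall x, In x l -> f x = g x) -> \sum_(x <- l) f x = \sum_(x <- l) g x.
Proof. intro Hfg. f_equal. now apply map_ext_in. Qed.

Lemma sumR_map_add {A : Type} (l : list A) (f g : A -> R) :
  \sum_(x <- l) (f x + g x) = \sum_(x <- l) f x + \sum_(x <- l) g x.
Proof. induction l as [|x l IH]; rewrite ?sumR_map_cons, ?IH; cbn; ring. Qed.

Lemma sumR_map_scal {A : Type} (l : list A) c (f : A -> R) :
  \sum_(x <- l) (c * f x) = c * \sum_(x <- l) f x.
Proof. induction l as [|x l IH]; rewrite ?sumR_map_cons, ?IH; cbn; ring. Qed.

Lemma sumR_map_zero {A : Type} (l : list A) : \sum_(x <- l) 0 = 0.
Proof. induction l as [|x l IH]; rewrite ?sumR_map_cons, ?IH; cbn; ring. Qed.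

Lemma sumR_map_swap {A B : Type} (s : list A) (t : list B) (f : A -> B -> R) :
  \sum_(x <- s) \sum_(y <- t) f x y = \sum_(y <- t) \sum_(x <- s) f x y.
Proof.
  induction s as [|x s IH].
  - exact (eq_sym (sumR_map_zero t)).
  - now rewrite sumR_map_cons, IH, <- sumR_map_add.
Qed.

Lemma sumR_map_delta (l : list nat) a (f : nat -> R) : NoDup l -> In a l ->
  \sum_(x <- l) (if Nat.eqb a x then f x else 0) = f a.
Proof.
  induction l as [|b l IH]; intros Hnd Ha; [destruct Ha|].
  inversion Hnd as [|? ? Hb Hnd']; subst.
  rewrite sumR_map_cons. destruct (Nat.eqb_spec a b) as [<-|Hab].
  - rewrite (sumR_map_ext_in _ _ (fun _ => 0)), sumR_map_zero; [ring|].
    intros x Hx. destruct (Nat.eqb_spec a x); congruence.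
  - destruct Ha as [->|Ha]; [congruence|]. rewrite IH; auto. ring.
Qed.

Lemma sumR2_map_ext_in {A B : Type} (s : list A) (t : list B) (F G : A -> B -> R) :
  (forall x y, In x s -> In y t -> F x y = G x y) ->
  \sum_(x <- s) \sum_(y <- t) F x y = \sum_(x <- s) \sum_(y <- t) G x y.
Proof. intro HFG. do 2 (apply sumR_map_ext_in; intros). now apply HFG. Qed.

Lemma sumR2_map_add {A B : Type} (s : list A) (t : list B) (F G : A -> B -> R) :
  \sum_(x <- s) \sum_(y <- t) (F x y + G x y) =
  \sum_(x <- s) \sum_(y <- t) F x y + \sum_(x <- s) \sum_(y <- t) G x y.
Proof.
  rewrite <- sumR_map_add. apply sumR_map_ext_in; intros. apply sumR_map_add.
Qed.

Lemma sumR3_map_ext_in {A : Type} (s : list A) (F G : A -> A -> A -> R) :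
  (forall x y z, In x s -> In y s -> In z s -> F x y z = G x y z) ->
  \sum_(x <- s) \sum_(y <- s) \sum_(z <- s) F x y z =
  \sum_(x <- s) \sum_(y <- s) \sum_(z <- s) G x y z.
Proof. intro HFG. do 3 (apply sumR_map_ext_in; intros). now apply HFG. Qed.

Lemma sumR3_map_scal {A : Type} (s : list A) c (F : A -> A -> A -> R) :
  \sum_(x <- s) \sum_(y <- s) \sum_(z <- s) (c * F x y z) =
  c * \sum_(x <- s) \sum_(y <- s) \sum_(z <- s) F x y z.
Proof.
  rewrite <- sumR_map_scal. apply sumR_map_ext_in. intros.
  rewrite <- sumR_map_scal. apply sumR_map_ext_in. intros. apply sumR_map_scal.
Qed.

Lemma sumR3_map_cyclic {A : Type} (s : list A) (F : A -> A -> A -> R) :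
  \sum_(x <- s) \sum_(y <- s) \sum_(z <- s) (F x y z + F y x z + F z x y) =
  3 * \sum_(x <- s) \sum_(y <- s) \sum_(z <- s) F x y z.
Proof.
  rewrite (sumR2_map_ext_in s s _ (fun x y =>
    \sum_(z <- s) F x y z + \sum_(z <- s) F y x z + \sum_(z <- s) F z x y))
    by (intros; rewrite !sumR_map_add; reflexivity).
  rewrite !sumR2_map_add, (sumR_map_swap s s (fun x y => \sum_(z <- s) F y x z)).
  rewrite (sumR_map_ext_in s (fun x => \sum_(y <- s) \sum_(z <- s) F z x y)
    (fun x => \sum_(z <- s) \sum_(y <- s) F z x y)) by (intros; apply sumR_map_swap).
  rewrite (sumR_map_swap s s (fun x z => \sum_(y <- s) F z x y)). ring.
Qed.

Lemma sumR_multi_indices_S (F : list nat -> R) n k :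
  \sum_(x <- multi_indices n (S k)) F x =
  \sum_(i <- seq 0 n) \sum_(x <- multi_indices n k) F (i :: x).
Proof.
  cbn [multi_indices]. induction (seq 0 n) as [|i s IH]; [reflexivity|].
  cbn [flat_map]. now rewrite map_app, sumR_app, map_map, IH.
Qed.

Lemma sumR_multi_indices_0 (F : list nat -> R) n : \sum_(x <- multi_indices n 0) F x = F [].
Proof. cbn. ring. Qed.

Lemma sumR_multi_indices_1 (F : list nat -> R) n :
  \sum_(x <- multi_indices n 1) F x = \sum_(i <- seq 0 n) F [i].
Proof.
  rewrite sumR_multi_indices_S. apply sumR_map_ext_in. intros. apply sumR_multi_indices_0.
Qed.

Lemma sumR_multi_indices_2 (F : list nat -> R) n :
  \sum_(x <- multi_indices n 2) F x = \sum_(i <- seq 0 n) \sum_(j <- seq 0 n) F [i; j].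
Proof.
  rewrite sumR_multi_indices_S. apply sumR_map_ext_in. intros. apply sumR_multi_indices_1.
Qed.

Lemma sumR_multi_indices_3 (F : list nat -> R) n :
  \sum_(x <- multi_indices n 3) F x =
  \sum_(i <- seq 0 n) \sum_(j <- seq 0 n) \sum_(k <- seq 0 n) F [i; j; k].
Proof.
  rewrite sumR_multi_indices_S. apply sumR_map_ext_in. intros. apply sumR_multi_indices_2.
Qed.

Section SumsOverCons.
Variables (a : nat) (s : list nat).

Lemma sum2_cons (F : nat -> nat -> R) :
  \sum_(i <- a :: s) \sum_(j <- a :: s) F i j =
  F a a + \sum_(j <- s) F a j + \sum_(i <- s) F i a + \sum_(i <- s) \sum_(j <- s) F i j.
Proof.
  rewrite !sumR_map_cons, (sumR_map_ext_in s (fun i => \sum_(j <- a :: s) F i j)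
    (fun i => F i a + \sum_(j <- s) F i j)) by (intros; apply sumR_map_cons).
  rewrite sumR_map_add. ring.
Qed.

Lemma sum3_cons (F : nat -> nat -> nat -> R) :
  \sum_(i <- a :: s) \sum_(j <- a :: s) \sum_(k <- a :: s) F i j k =
  F a a a + \sum_(k <- s) (F a a k + F a k a + F k a a)
  + \sum_(j <- s) \sum_(k <- s) (F a j k + F j a k + F j k a)
  + \sum_(i <- s) \sum_(j <- s) \sum_(k <- s) F i j k.
Proof.
  rewrite (sumR2_map_ext_in (a :: s) (a :: s) _
    (fun i j => F i j a + \sum_(k <- s) F i j k)) by (intros; apply sumR_map_cons).
  rewrite sumR2_map_add, !sum2_cons, !sumR_map_add, sumR2_map_add, sumR2_map_add.
  ring.
Qed.

End SumsOverCons.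

(** * Fourier modes on [[0, 1]] *)

Definition phase_line (m : Z) (p x : R) : R := 2 * PI * IZR m * x + p.
Definition wave (m : Z) (p x : R) : R := cos (phase_line m p x).
Definition wave_mean (m : Z) (p : R) : R := if (m =? 0)%Z then cos p else 0.

Lemma phase_line_add m n p q x :
  phase_line (m + n) (p + q) x = phase_line m p x + phase_line n q x.
Proof. unfold phase_line. rewrite plus_IZR. ring. Qed.

Lemma phase_line_sub m n p q x :
  phase_line (m - n) (p - q) x = phase_line m p x - phase_line n q x.
Proof. unfold phase_line. rewrite minus_IZR. ring. Qed.

Lemma wave_mul m n p q x :
  wave m p x * wave n q x = / 2 * (wave (m + n) (p + q) x + wave (m - n) (p - q) x).
Proof. unfold wave. rewrite phase_line_add, phase_line_sub, cos_plus, cos_minus. field. Qed.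

Lemma wave_mul3 m n k p q r x :
  wave m p x * wave n q x * wave k r x =
  / 4 * (wave (m + n + k) (p + q + r) x + wave (m + n - k) (p + q - r) x
         + wave (m + k - n) (p + r - q) x + wave (n + k - m) (q + r - p) x).
Proof.
  unfold wave. rewrite !phase_line_add, !phase_line_sub, !phase_line_add.
  set (u := phase_line m p x); set (v := phase_line n q x); set (w := phase_line k r x).
  rewrite !cos_minus, !cos_plus, !sin_plus. field.
Qed.

Lemma sin_add_2PI_mult (x : R) (m : Z) : sin (x + 2 * IZR m * PI) = sin x.
Proof.
  destruct (Z_le_gt_dec 0 m) as [Hm|Hm].
  - rewrite <- (Z2Nat.id m), <- INR_IZR_INZ by exact Hm. apply sin_period.
  - rewrite <- (sin_period _ (Z.to_nat (- m))), INR_IZR_INZ, Z2Nat.id, opp_IZR by lia.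
    f_equal. ring.
Qed.

Lemma is_RInt_wave m p : is_RInt (wave m p) 0 1 (wave_mean m p).
Proof.
  unfold wave, wave_mean, phase_line. destruct (Z.eqb_spec m 0) as [->|Hm].
  - apply (is_RInt_ext (fun _ => cos p)); [intros; f_equal; ring|].
    replace (cos p) with (scal (1 - 0) (cos p)) at 1
      by (cbv [scal]; simpl; unfold mult; simpl; ring).
    apply (is_RInt_const (V := R_NormedModule)).
  - assert (HPI : PI <> 0) by (pose proof PI_RGT_0; lra).
    apply not_0_IZR in Hm.
    replace 0 with (minus (sin (2 * PI * IZR m * 1 + p) / (2 * PI * IZR m))
                          (sin (2 * PI * IZR m * 0 + p) / (2 * PI * IZR m))) at 2.
    + apply (is_RInt_derive (fun x => sin (2 * PI * IZR m * x + p) / (2 * PI * IZR m))).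
      * intros x _. auto_derive; [easy|]. now field.
      * intros x _. apply (ex_derive_continuous (fun x => cos (2 * PI * IZR m * x + p))).
        auto_derive. easy.
    + cbv [minus plus opp]; simpl.
      replace (2 * PI * IZR m * 1 + p) with (p + 2 * IZR m * PI) by ring.
      rewrite sin_add_2PI_mult, Rmult_0_r, Rplus_0_l. now field.
Qed.

Lemma is_RInt_Rmult_l (f : R -> R) a b c v :
  is_RInt f a b v -> is_RInt (fun x => c * f x) a b (c * v).
Proof. exact (is_RInt_scal f a b c v). Qed.

Lemma is_RInt_Rplus (f g : R -> R) a b v w :
  is_RInt f a b v -> is_RInt g a b w -> is_RInt (fun x => f x + g x) a b (v + w).
Proof. exact (is_RInt_plus f g a b v w). Qed.

(** * Entries of the projected moment tensors *)

Definition amplitude (t0 : R) (t1 t2 : nat -> R) (i : nat) : R :=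
  match i with O => t0 | S _ => rmod t1 t2 i end.
Definition phase (lam : nat -> R) (i : nat) : R :=
  match i with O => 0 | S _ => - lam i end.

Lemma amplitude_nonzero t0 t1 t2 i : (i <> 0)%nat -> amplitude t0 t1 t2 i = rmod t1 t2 i.
Proof. now destruct i. Qed.

Lemma phase_nonzero lam i : (i <> 0)%nat -> phase lam i = - lam i.
Proof. now destruct i. Qed.

Lemma proj_rot_polar L t0 t1 t2 lam x i :
  polar_angles L t1 t2 lam -> (i <= L)%nat ->
  proj_rot t0 t1 t2 x i = sqrt 2 * amplitude t0 t1 t2 i * wave (Z.of_nat i) (phase lam i) x.
Proof.
  intros Hlam Hi. unfold wave, phase_line. destruct i as [|i].
  - cbn. rewrite Rmult_0_r, Rmult_0_l, Rplus_0_l, cos_0. ring.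
  - destruct (Hlam (S i)) as [Hc Hs]; [lia|].
    cbn [proj_rot amplitude phase]. rewrite <- INR_IZR_INZ, Hc, Hs.
    rewrite cos_plus, cos_neg, sin_neg. ring.
Qed.

Lemma prod_map_perm (f : nat -> R) l l' :
  Permutation l l' -> fold_right Rmult 1 (map f l) = fold_right Rmult 1 (map f l').
Proof. induction 1; cbn; rewrite ?IHPermutation1; try congruence; ring. Qed.

Lemma Ttilde_perm t0 t1 t2 idx idx' :
  Permutation idx idx' -> Ttilde t0 t1 t2 idx = Ttilde t0 t1 t2 idx'.
Proof. intro Hperm. apply RInt_ext. intros. now apply prod_map_perm. Qed.

(* With [p = phase lam], [p l' + p l'' - p l] is the paper's [lambda_{l,l',l''}]. *)
Definition triad (a p : nat -> R) (l l' l'' : nat) : R :=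
  if l =? l' + l'' then a l * a l' * a l'' * cos (p l' + p l'' - p l) else 0.

Ltac decide_frequencies :=
  unfold wave_mean;
  repeat match goal with |- context [(?m =? ?n)%Z] => destruct (Z.eqb_spec m n); try lia end.

Ltac cos_zero :=
  repeat match goal with |- context [cos ?u] => replace u with 0 by ring; rewrite cos_0 end.

Section Entries.
Variables (L : nat) (t0 : R) (t1 t2 lam : nat -> R).
Hypothesis Hlam : polar_angles L t1 t2 lam.

Local Notation a := (amplitude t0 t1 t2).
Local Notation p := (phase lam).
Local Notation z := Z.of_nat.
Local Notation T := (Ttilde t0 t1 t2).

Lemma Ttilde1_fourier i : (i <= L)%nat -> T [i] = sqrt 2 * a i * wave_mean (z i) (p i).
Proof.
  intro Hi. apply is_RInt_unique.
  apply (is_RInt_ext (fun x => sqrt 2 * a i * wave (z i) (p i) x)).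
  - intros x _. cbn. rewrite (proj_rot_polar L t0 t1 t2 lam) by assumption. ring.
  - apply is_RInt_Rmult_l, is_RInt_wave.
Qed.

Lemma Ttilde2_fourier i j : (i <= L)%nat -> (j <= L)%nat ->
  T [i; j] = a i * a j *
    (wave_mean (z i + z j) (p i + p j) + wave_mean (z i - z j) (p i - p j)).
Proof.
  intros Hi Hj. apply is_RInt_unique.
  apply (is_RInt_ext (fun x => a i * a j *
    (wave (z i + z j) (p i + p j) x + wave (z i - z j) (p i - p j) x))).
  - intros x _. cbn. rewrite !(proj_rot_polar L t0 t1 t2 lam) by assumption.
    transitivity (sqrt 2 * sqrt 2 * a i * a j * (wave (z i) (p i) x * wave (z j) (p j) x));
      [|ring].
    rewrite sqrt_sqrt, wave_mul by lra. field.
  - apply is_RInt_Rmult_l, is_RInt_Rplus; apply is_RInt_wave.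
Qed.

Lemma Ttilde3_fourier i j k : (i <= L)%nat -> (j <= L)%nat -> (k <= L)%nat ->
  T [i; j; k] = sqrt 2 / 2 * (a i * a j * a k) *
    (wave_mean (z i + z j + z k) (p i + p j + p k)
     + wave_mean (z i + z j - z k) (p i + p j - p k)
     + wave_mean (z i + z k - z j) (p i + p k - p j)
     + wave_mean (z j + z k - z i) (p j + p k - p i)).
Proof.
  intros Hi Hj Hk. apply is_RInt_unique.
  apply (is_RInt_ext (fun x => sqrt 2 / 2 * (a i * a j * a k) *
    (wave (z i + z j + z k) (p i + p j + p k) x
     + wave (z i + z j - z k) (p i + p j - p k) x
     + wave (z i + z k - z j) (p i + p k - p j) x
     + wave (z j + z k - z i) (p j + p k - p i) x))).
  - intros x _. cbn. rewrite !(proj_rot_polar L t0 t1 t2 lam) by assumption.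
    transitivity (sqrt 2 * sqrt 2 * sqrt 2 * a i * a j * a k *
      (wave (z i) (p i) x * wave (z j) (p j) x * wave (z k) (p k) x)); [|ring].
    rewrite sqrt_sqrt, wave_mul3 by lra. field.
  - apply is_RInt_Rmult_l.
    do 3 (apply is_RInt_Rplus; [|apply is_RInt_wave]). apply is_RInt_wave.
Qed.

Lemma Ttilde_0 : T [0%nat] = sqrt 2 * t0.
Proof.
  rewrite Ttilde1_fourier by lia. decide_frequencies. cbn. rewrite cos_0. ring.
Qed.

Lemma Ttilde_i i : (1 <= i <= L)%nat -> T [i] = 0.
Proof. intro Hi. rewrite Ttilde1_fourier by lia. decide_frequencies. ring. Qed.

Lemma Ttilde_00 : T [0%nat; 0%nat] = 2 * t0 ^ 2.
Proof.
  rewrite Ttilde2_fourier by lia. decide_frequencies. cbn. cos_zero. ring.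
Qed.

Lemma Ttilde_0j j : (1 <= j <= L)%nat -> T [0%nat; j] = 0.
Proof. intro Hj. rewrite Ttilde2_fourier by lia. decide_frequencies. ring. Qed.

Lemma Ttilde_ij i j : (1 <= i <= L)%nat -> (1 <= j <= L)%nat ->
  T [i; j] = if i =? j then rmod t1 t2 i ^ 2 else 0.
Proof.
  intros Hi Hj. rewrite Ttilde2_fourier by lia.
  destruct (Nat.eqb_spec i j) as [<-|Hij]; decide_frequencies; cos_zero;
    rewrite ?amplitude_nonzero by lia; ring.
Qed.

Lemma Ttilde_000 : T [0%nat; 0%nat; 0%nat] = sqrt 2 * (2 * t0 ^ 3).
Proof.
  rewrite Ttilde3_fourier by lia. decide_frequencies. cbn. cos_zero. field.
Qed.

Lemma Ttilde_00k k : (1 <= k <= L)%nat -> T [0%nat; 0%nat; k] = 0.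
Proof. intro Hk. rewrite Ttilde3_fourier by lia. decide_frequencies. ring. Qed.

Lemma Ttilde_0jk j k : (1 <= j <= L)%nat -> (1 <= k <= L)%nat ->
  T [0%nat; j; k] = sqrt 2 * (if j =? k then t0 * rmod t1 t2 j ^ 2 else 0).
Proof.
  intros Hj Hk. rewrite Ttilde3_fourier by lia.
  destruct (Nat.eqb_spec j k) as [<-|Hjk]; decide_frequencies; cbn; cos_zero;
    rewrite ?amplitude_nonzero by lia; field.
Qed.

Lemma Ttilde_ijk i j k : (1 <= i <= L)%nat -> (1 <= j <= L)%nat -> (1 <= k <= L)%nat ->
  T [i; j; k] = sqrt 2 * (/ 2 * (triad a p i j k + triad a p j i k + triad a p k i j)).
Proof.
  intros Hi Hj Hk. rewrite Ttilde3_fourier by lia. unfold triad.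
  destruct (Nat.eqb_spec i (j + k)), (Nat.eqb_spec j (i + k)), (Nat.eqb_spec k (i + j));
    try lia; decide_frequencies; field.
Qed.

End Entries.

(** * The moment discrepancies *)

Lemma s3_term_triad t0 t1 t2 lam s0 s1 s2 lams l l' l'' :
  (1 <= l')%nat -> (1 <= l'')%nat ->
  (if l =? l' + l'' then s3_term t1 t2 lam s1 s2 lams l l' l'' else 0) =
  2 * (triad (amplitude t0 t1 t2) (phase lam) l l' l''
       - triad (amplitude s0 s1 s2) (phase lams) l l' l'') ^ 2.
Proof.
  intros Hl' Hl''. unfold triad. destruct (Nat.eqb_spec l (l' + l'')) as [Hl|]; [|ring].
  rewrite !amplitude_nonzero, !phase_nonzero by lia.
  unfold s3_term, r3, lam3. cbv zeta.
  replace (- lam l' + - lam l'' - - lam l) with (lam l - lam l' - lam l'') by ring.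
  replace (- lams l' + - lams l'' - - lams l) with (lams l - lams l' - lams l'') by ring.
  rewrite !cos_2a_cos, cos_minus, cos_plus. ring.
Qed.

Lemma sqrt2_mul_sub_sq x y : (sqrt 2 * x - sqrt 2 * y) ^ 2 = 2 * (x - y) ^ 2.
Proof.
  transitivity (sqrt 2 * sqrt 2 * (x - y) ^ 2); [ring|]. now rewrite sqrt_sqrt by lra.
Qed.

Section Moments.
Variables (L : nat) (t0 : R) (t1 t2 lam : nat -> R) (s0 : R) (s1 s2 lams : nat -> R).
Hypotheses (Hlam : polar_angles L t1 t2 lam) (Hlams : polar_angles L s1 s2 lams).

Local Notation gap idx := ((Ttilde t0 t1 t2 idx - Ttilde s0 s1 s2 idx) ^ 2).
Local Notation S1L := (seq 1 L).

Lemma stilde_1 : stilde L 1 t0 t1 t2 s0 s1 s2 = (t0 - s0) ^ 2.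
Proof.
  unfold stilde. rewrite sumR_multi_indices_1. change (seq 0 (S L)) with (0%nat :: S1L).
  rewrite sumR_map_cons, (sumR_map_ext_in S1L _ (fun _ => 0)), sumR_map_zero.
  - rewrite (Ttilde_0 L _ _ _ lam), (Ttilde_0 L _ _ _ lams), sqrt2_mul_sub_sq by assumption.
    cbn [fact INR Nat.mul Nat.add]. field.
  - intros i Hi. apply in_seq in Hi.
    rewrite (Ttilde_i L _ _ _ lam), (Ttilde_i L _ _ _ lams) by (assumption || lia). ring.
Qed.

Lemma sum_gap_ij :
  \sum_(i <- S1L) \sum_(j <- S1L) gap [i; j] =
  \sum_(l <- S1L) (rmod t1 t2 l ^ 2 - rmod s1 s2 l ^ 2) ^ 2.
Proof.
  apply sumR_map_ext_in. intros i Hi. apply in_seq in Hi.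
  rewrite (sumR_map_ext_in S1L _
    (fun j => if i =? j then (rmod t1 t2 j ^ 2 - rmod s1 s2 j ^ 2) ^ 2 else 0)).
  - apply (sumR_map_delta _ _ (fun l => (rmod t1 t2 l ^ 2 - rmod s1 s2 l ^ 2) ^ 2));
      [apply seq_NoDup|apply in_seq; lia].
  - intros j Hj. apply in_seq in Hj.
    rewrite (Ttilde_ij L _ _ _ lam), (Ttilde_ij L _ _ _ lams) by (assumption || lia).
    destruct (Nat.eqb_spec i j) as [<-|]; ring.
Qed.

Lemma gap_0j j : (1 <= j <= L)%nat -> gap [0%nat; j] = 0.
Proof.
  intro Hj. rewrite (Ttilde_0j L _ _ _ lam), (Ttilde_0j L _ _ _ lams) by assumption. ring.
Qed.

Lemma stilde_2 : stilde L 2 t0 t1 t2 s0 s1 s2 =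
  (t0 ^ 2 - s0 ^ 2) ^ 2 + / 4 * sum1L L (fun l => (rmod t1 t2 l ^ 2 - rmod s1 s2 l ^ 2) ^ 2).
Proof.
  unfold stilde, sum1L. rewrite sumR_multi_indices_2. change (seq 0 (S L)) with (0%nat :: S1L).
  rewrite sum2_cons, sum_gap_ij, (Ttilde_00 L _ _ _ lam), (Ttilde_00 L _ _ _ lams) by assumption.
  rewrite (sumR_map_ext_in S1L (fun j => gap [0%nat; j]) (fun _ => 0)),
    (sumR_map_ext_in S1L (fun i => gap [i; 0%nat]) (fun _ => 0)), !sumR_map_zero.
  - cbn [fact INR Nat.mul Nat.add]. field.
  - intros i Hi. apply in_seq in Hi.
    rewrite !(Ttilde_perm _ _ _ [i; 0%nat] [0%nat; i]) by constructor. apply gap_0j. lia.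
  - intros j Hj. apply in_seq in Hj. apply gap_0j. lia.
Qed.

Local Notation W l l' l'' :=
  (if l =? l' + l'' then s3_term t1 t2 lam s1 s2 lams l l' l'' else 0).

Lemma gap_000 : gap [0%nat; 0%nat; 0%nat] = 8 * (t0 ^ 3 - s0 ^ 3) ^ 2.
Proof.
  rewrite (Ttilde_000 L _ _ _ lam), (Ttilde_000 L _ _ _ lams), sqrt2_mul_sub_sq by assumption.
  ring.
Qed.

Lemma gap_00k k : (1 <= k <= L)%nat ->
  gap [0%nat; 0%nat; k] + gap [0%nat; k; 0%nat] + gap [k; 0%nat; 0%nat] = 0.
Proof.
  intro Hk.
  rewrite !(Ttilde_perm _ _ _ [0%nat; k; 0%nat] [0%nat; 0%nat; k]) by repeat constructor.
  rewrite !(Ttilde_perm _ _ _ [k; 0%nat; 0%nat] [0%nat; 0%nat; k])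
    by exact (Permutation_cons_append [0%nat; 0%nat] k).
  rewrite (Ttilde_00k L _ _ _ lam), (Ttilde_00k L _ _ _ lams) by assumption. ring.
Qed.

Lemma gap_0jk j k : (1 <= j <= L)%nat -> (1 <= k <= L)%nat ->
  gap [0%nat; j; k] + gap [j; 0%nat; k] + gap [j; k; 0%nat] =
  if j =? k then 6 * (t0 * rmod t1 t2 k ^ 2 - s0 * rmod s1 s2 k ^ 2) ^ 2 else 0.
Proof.
  intros Hj Hk.
  rewrite !(Ttilde_perm _ _ _ [j; 0%nat; k] [0%nat; j; k]) by constructor.
  rewrite !(Ttilde_perm _ _ _ [j; k; 0%nat] [0%nat; j; k])
    by exact (Permutation_sym (Permutation_cons_append [j; k] 0%nat)).
  rewrite (Ttilde_0jk L _ _ _ lam), (Ttilde_0jk L _ _ _ lams), sqrt2_mul_sub_sq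
    by assumption.
  destruct (Nat.eqb_spec j k) as [<-|]; ring.
Qed.

Lemma gap_ijk i j k : (1 <= i <= L)%nat -> (1 <= j <= L)%nat -> (1 <= k <= L)%nat ->
  gap [i; j; k] = / 4 * (W i j k + W j i k + W k i j).
Proof.
  intros Hi Hj Hk.
  rewrite (Ttilde_ijk L _ _ _ lam), (Ttilde_ijk L _ _ _ lams), sqrt2_mul_sub_sq by assumption.
  rewrite !(s3_term_triad t0 t1 t2 lam s0 s1 s2 lams) by lia. unfold triad.
  (* for positive indices at most one of the three balances holds: no cross terms *)
  destruct (Nat.eqb_spec i (j + k)), (Nat.eqb_spec j (i + k)), (Nat.eqb_spec k (i + j));
    try lia; field.
Qed.

Lemma sum_gap_0jk :
  \sum_(j <- S1L) \sum_(k <- S1L) (gap [0%nat; j; k] + gap [j; 0%nat; k] + gap [j; k; 0%nat]) =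
  6 * \sum_(l <- S1L) (t0 * rmod t1 t2 l ^ 2 - s0 * rmod s1 s2 l ^ 2) ^ 2.
Proof.
  rewrite (sumR2_map_ext_in S1L S1L _ (fun j k =>
    if j =? k then 6 * (t0 * rmod t1 t2 k ^ 2 - s0 * rmod s1 s2 k ^ 2) ^ 2 else 0))
    by (intros j k; rewrite !in_seq; intros; apply gap_0jk; lia).
  rewrite <- sumR_map_scal. apply sumR_map_ext_in. intros j Hj.
  apply (sumR_map_delta _ _ (fun k => 6 * (t0 * rmod t1 t2 k ^ 2 - s0 * rmod s1 s2 k ^ 2) ^ 2));
    [apply seq_NoDup|exact Hj].
Qed.

Lemma sum_gap_ijk :
  \sum_(i <- S1L) \sum_(j <- S1L) \sum_(k <- S1L) gap [i; j; k] =
  3 / 4 * \sum_(i <- S1L) \sum_(j <- S1L) \sum_(k <- S1L) W i j k.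
Proof.
  rewrite (sumR3_map_ext_in S1L _ (fun i j k => / 4 * (W i j k + W j i k + W k i j)))
    by (intros i j k; rewrite !in_seq; intros; apply gap_ijk; lia).
  rewrite sumR3_map_scal, sumR3_map_cyclic. field.
Qed.

Lemma stilde_3 : stilde L 3 t0 t1 t2 s0 s1 s2 =
  2 / 3 * (t0 ^ 3 - s0 ^ 3) ^ 2
  + / 2 * sum1L L (fun l => (t0 * rmod t1 t2 l ^ 2 - s0 * rmod s1 s2 l ^ 2) ^ 2)
  + / 16 * sum1L L (fun l => sum1L L (fun l' => sum1L L (fun l'' => W l l' l''))).
Proof.
  unfold stilde, sum1L. rewrite sumR_multi_indices_3. change (seq 0 (S L)) with (0%nat :: S1L).
  rewrite sum3_cons, gap_000, sum_gap_0jk, sum_gap_ijk.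
  rewrite (sumR_map_ext_in S1L _ (fun _ => 0)), sumR_map_zero
    by (intros k Hk; apply in_seq in Hk; apply gap_00k; lia).
  cbn [fact INR Nat.mul Nat.add]. field.
Qed.

End Moments.

Theorem theoremC2 (L : nat) (HL : (1 <= L)%nat)
  (t0 : R) (t1 t2 : nat -> R) (s0 : R) (s1 s2 : nat -> R)
  (lam lams : nat -> R)
  (Hlam : polar_angles L t1 t2 lam) (Hlams : polar_angles L s1 s2 lams) :
  stilde L 1 t0 t1 t2 s0 s1 s2 = (t0 - s0) ^ 2 /\
  stilde L 2 t0 t1 t2 s0 s1 s2 =
    (t0 ^ 2 - s0 ^ 2) ^ 2
    + / 4 * sum1L L (fun l => (rmod t1 t2 l ^ 2 - rmod s1 s2 l ^ 2) ^ 2) /\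
  stilde L 3 t0 t1 t2 s0 s1 s2 =
    2 / 3 * (t0 ^ 3 - s0 ^ 3) ^ 2
    + / 2 * sum1L L (fun l => (t0 * rmod t1 t2 l ^ 2 - s0 * rmod s1 s2 l ^ 2) ^ 2)
    + / 16 * sum1L L (fun l => sum1L L (fun l' => sum1L L (fun l'' =>
        if Nat.eqb l (l' + l'') then s3_term t1 t2 lam s1 s2 lams l l' l'' else 0))).
Proof.
  split; [|split].
  - exact (stilde_1 L t0 t1 t2 lam s0 s1 s2 lams Hlam Hlams).
  - exact (stilde_2 L t0 t1 t2 lam s0 s1 s2 lams Hlam Hlams).
  - exact (stilde_3 L t0 t1 t2 lam s0 s1 s2 lams Hlam Hlams).
Qed.
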